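(* Let $v_1,\dots,v_m\in\mathbb{R}^2$ and let $P$ be the polygonal path obtained by placing these vectors tip-to-tail in this order, i.e. the path with vertices $q_0=0$, $q_k=v_1+\dots+v_k$ ($1\le k\le m$) and edges $s_k=[q_{k-1},q_k]$. If $P$ has a crossing, then among $v_1,\dots,v_m$ there is a vector with positive first coordinate and one with negative first coordinate, and there is a vector with positive second coordinate and one with negative second coordinate.
   Context: A crossing of $P$ is a point where two non-consecutive edges $s_i,s_j$ ($|i-j|\ge 2$) intersect transversally, i.e. they meet at a single point lying in the interior of both edges, and the two edges are not parallel. Here the ''first coordinate'' is the $i$-component and the ''second coordinate'' is the $j$-component of the vector. *)

(* Points/vectors of R^2 are pairs (x, y) : R * R over an
   arbitrary real field R (the statement is purely algebraic/order-theoretic). *)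
From mathcomp Require Import all_boot all_order all_algebra.
Set Implicit Arguments. Unset Strict Implicit. Unset Printing Implicit Defensive.
Import Order.TTheory GRing.Theory Num.Theory.
Local Open Scope ring_scope.

Section Path.
Variables (R : realFieldType) (m : nat) (v : 'I_m -> R * R).

(* vertex q_k = v_1 + ... + v_k  (here with 0-indexed vectors v 0, ..., v (m-1)):
   q k = sum of the first k vectors, q 0 = 0. *)
Definition vertex (k : nat) : R * R :=
  (\sum_(i < m | (i < k)%N) (v i).1, \sum_(i < m | (i < k)%N) (v i).2).

Definition on_edge (i : 'I_m) (p : R * R) : Prop :=
  exists t : R, 0 <= t <= 1 /\
    p = ((vertex i).1 + t * (v i).1, (vertex i).2 + t * (v i).2).

Definition in_edge_interior (i : 'I_m) (p : R * R) : Prop :=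
  exists t : R, 0 < t < 1 /\
    p = ((vertex i).1 + t * (v i).1, (vertex i).2 + t * (v i).2).

Definition parallel (a b : R * R) : Prop := a.1 * b.2 - a.2 * b.1 = 0.

Definition has_crossing : Prop :=
  exists (i j : 'I_m) (p : R * R),
    (i.+2 <= j)%N /\
    (forall x, (on_edge i x /\ on_edge j x) <-> x = p) /\
    in_edge_interior i p /\ in_edge_interior j p /\
    ~ parallel (v i) (v j).

End Path.

From mathcomp Require Import all_boot all_order all_algebra.
From mathcomp Require Import lra.
Set Implicit Arguments. Unset Strict Implicit. Unset Printing Implicit Defensive.
Import Order.TTheory GRing.Theory Num.Theory.
Local Open Scope ring_scope.

(* If all first coordinates of the v_k have the same sign, the first coordinate
   is monotone along P.  A point lying inside edge i and inside a later edge j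
   then forces the first coordinate to be constant from inside s_i to inside
   s_j, so both v_i and v_j have first coordinate 0 and are parallel, which a
   crossing forbids.  The same argument applies to the second coordinate. *)

Section Walk.

Variables (R : realFieldType) (m : nat).

Lemma sum_prefix_split (f : 'I_m -> R) (i j : 'I_m) : (i < j)%N ->
  \sum_(k < m | (k < j)%N) f k =
  \sum_(k < m | (k < i)%N) f k + f i + \sum_(k < m | (i < k < j)%N) f k.
Proof.
move=> lt_ij; rewrite (bigID (fun k : 'I_m => (k < i)%N)) /= -addrA.
congr (_ + _).
  apply: eq_bigl => k; case: (ltnP k i) => [lt_ki|]; rewrite ?andbT ?andbF //.
  exact: ltn_trans lt_ki lt_ij.
rewrite (bigD1 i) /=; last by rewrite lt_ij ltnn.
congr (_ + _); apply: eq_bigl => k.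
rewrite -leqNgt [(i < k)%N]ltn_neqAle eq_sym.
by case: (k < j)%N; case: (i <= k)%N; rewrite ?andbT ?andbF.
Qed.

Lemma nonpos_steps_meet (f : 'I_m -> R) (i j : 'I_m) (t u : R) :
  (forall k, f k <= 0) -> (i < j)%N -> t < 1 -> 0 < u ->
  \sum_(k < m | (k < i)%N) f k + t * f i =
  \sum_(k < m | (k < j)%N) f k + u * f j ->
  f i = 0 /\ f j = 0.
Proof.
move=> f_le0 lt_ij t_lt1 u_gt0; rewrite (sum_prefix_split f lt_ij).
set S := \sum_(k < m | (i < k < j)%N) f k => meet.
have S_le0 : S <= 0 by apply: sumr_le0 => k _; apply: f_le0.
have fi_le0 := f_le0 i; have fj_le0 := f_le0 j.
have rest_le0 : (1 - t) * f i <= 0 by rewrite mulr_ge0_le0 // subr_ge0 ltW.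
have last_le0 : u * f j <= 0 by rewrite mulr_ge0_le0 // ltW.
have /eqP : (1 - t) * f i = 0 by lra.
have /eqP : u * f j = 0 by lra.
rewrite !mulf_eq0 (gt_eqF u_gt0) subr_eq0 (gt_eqF t_lt1) /=.
by move=> /eqP-> /eqP->.
Qed.

Lemma const_sign_steps_meet (f : 'I_m -> R) (i j : 'I_m) (t u : R) :
  (forall k, f k <= 0) \/ (forall k, 0 <= f k) ->
  (i < j)%N -> t < 1 -> 0 < u ->
  \sum_(k < m | (k < i)%N) f k + t * f i =
  \sum_(k < m | (k < j)%N) f k + u * f j ->
  f i = 0 /\ f j = 0.
Proof.
move=> [f_le0|f_ge0] lt_ij t_lt1 u_gt0 meet; first exact: nonpos_steps_meet meet.
have [] := @nonpos_steps_meet (fun k => - f k) i j t u _ lt_ij t_lt1 u_gt0.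
- by move=> k; rewrite oppr_le0.
- by rewrite !sumrN !mulrN -!opprD meet.
by move=> /eqP; rewrite oppr_eq0 => /eqP-> /eqP; rewrite oppr_eq0 => /eqP->.
Qed.

Lemma sign_change_or_const_sign (f : 'I_m -> R) :
  ((exists k, 0 < f k) /\ (exists k, f k < 0)) \/
  ((forall k, f k <= 0) \/ (forall k, 0 <= f k)).
Proof.
have [k fk_gt0|no_pos] := pickP (fun k => 0 < f k); last first.
  by right; left => x; rewrite leNgt no_pos.
have [l fl_lt0|no_neg] := pickP (fun k => f k < 0); last first.
  by right; right => x; rewrite leNgt no_neg.
by left; split; [exists k | exists l].
Qed.

End Walk.

Theorem lemma2p1 (R : realFieldType) (m : nat) (v : 'I_m -> R * R) :
  has_crossing v ->
  (exists i, 0 < (v i).1) /\ (exists i, (v i).1 < 0) /\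
  (exists i, 0 < (v i).2) /\ (exists i, (v i).2 < 0).
Proof.
move=> [i [j [p [le_i2_j [_ [[t [/andP[_ t_lt1] ->]] [[u [/andP[u_gt0 _]]]]]]]]]].
move=> [/= meet1 meet2] not_par.
have lt_ij : (i < j)%N by apply: ltn_trans le_i2_j.
have sign_change (g : 'I_m -> R) :
    \sum_(k < m | (k < i)%N) g k + t * g i =
    \sum_(k < m | (k < j)%N) g k + u * g j ->
    ~ (g i = 0 /\ g j = 0) -> (exists k, 0 < g k) /\ (exists k, g k < 0).
  move=> meet not_flat; case: (sign_change_or_const_sign g) => // sign.
  by case: not_flat; apply: const_sign_steps_meet sign lt_ij t_lt1 u_gt0 meet.
have [pos1 neg1] : (exists k, 0 < (v k).1) /\ (exists k, (v k).1 < 0).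
  apply: sign_change meet1 _ => -[vi0 vj0]; apply: not_par.
  by rewrite /parallel vi0 vj0 mul0r mulr0 subrr.
have [pos2 neg2] : (exists k, 0 < (v k).2) /\ (exists k, (v k).2 < 0).
  apply: sign_change meet2 _ => -[vi0 vj0]; apply: not_par.
  by rewrite /parallel vi0 vj0 mul0r mulr0 subrr.
exact: (conj pos1 (conj neg1 (conj pos2 neg2))).
Qed.
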